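(* Let ${\bf f}_1:\mathbb{R}^m\times\mathbb{R}_{\ge 0}\to\mathbb{R}^m$ and ${\bf f}_2:\mathbb{R}^m\times\mathbb{R}_{\ge 0}\to\mathbb{R}^m$ be continuously differentiable. Suppose both are contracting with identity metric, i.e. there is $\beta>0$ such that the symmetric parts of the Jacobians satisfy $\frac12\big(\frac{\partial {\bf f}_k}{\partial {\bf x}}+\frac{\partial {\bf f}_k}{\partial {\bf x}}^T\big)({\bf x},t)\le -\beta I$ for all ${\bf x},t$ and $k=1,2$; assume also that these Jacobians are uniformly bounded. Let ${\bf G}$ be a constant real $m\times p$ matrix, let $k_{12},k_{21}>0$ and let $T_{12},T_{21}\ge 0$ be constant delays. Consider the coupled delay system $$\dot{\bf x}_1(t)={\bf f}_1({\bf x}_1,t)+\tfrac{1}{k_{21}}{\bf G}{\bf G}^T\big({\bf x}_2(t-T_{21})-{\bf x}_1(t)\big),\qquad \dot{\bf x}_2(t)={\bf f}_2({\bf x}_2,t)+\tfrac{1}{k_{12}}{\bf G}{\bf G}^T\big({\bf x}_1(t-T_{12})-{\bf x}_2(t)\big),$$ with continuous initial functions on $[-\max(T_{12},T_{21}),0]$. Then the overall system is asymptotically contracting: for all values of the delays, any two solutions converge asymptotically to each other (all solutions converge to a single trajectory, independently of the initial conditions).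
   Context: A system is called asymptotically contracting if every virtual displacement (infinitesimal difference $\delta{\bf x}$ between neighboring solutions, $\delta{\bf x}=\frac{\partial {\bf x}}{\partial {\bf x}_o}d{\bf x}_o$ with respect to initial data) tends to zero as $t\to\infty$, which implies global asymptotic convergence of all solutions to a single trajectory. *)

From HB Require Import structures.
From mathcomp Require Import all_boot all_order all_algebra.
From mathcomp Require Import all_classical all_reals all_analysis.
Import Order.TTheory GRing.Theory Num.Theory.
Import numFieldNormedType.Exports.
Local Open Scope classical_set_scope.
Local Open Scope ring_scope.

Set Implicit Arguments.
Unset Strict Implicit.
Unset Printing Implicit Defensive.

Definition loewner_le (R : realType) (m : nat) (A B : 'M[R]_m) : Prop :=
  forall v : 'rV[R]_m, 0 <= (v *m (B - A) *m v^T) 0 0.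

Definition sym_part (R : realType) (m : nat) (J : 'M[R]_m) : 'M[R]_m :=
  2^-1 *: (J + J^T).

(* Jacobian of x |-> f x t at x (MathComp-Analysis convention: 'D_v g x = v *m 'J g x,
   i.e. the transpose of the usual Jacobian; the symmetric part is unaffected). *)
Definition jac (R : realType) (m : nat) (f : 'rV[R]_m -> R -> 'rV[R]_m)
  (x : 'rV[R]_m) (t : R) : 'M[R]_m := jacobian (fun y => f y t) x.

Definition C1 (R : realType) (m : nat) (f : 'rV[R]_m -> R -> 'rV[R]_m) : Prop :=
  let F := fun p : 'rV[R]_m * R => f p.1 p.2 in
  (forall p, differentiable F p) /\
  (forall v : 'rV[R]_m * R, continuous (fun p => 'd F p v)).

Definition contracting_id (R : realType) (m : nat) (f : 'rV[R]_m -> R -> 'rV[R]_m)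
  (beta : R) : Prop :=
  forall x t, 0 <= t -> loewner_le (sym_part (jac f x t)) (- beta *: 1%:M).

Definition bounded_jac (R : realType) (m : nat) (f : 'rV[R]_m -> R -> 'rV[R]_m) : Prop :=
  exists M : R, forall x t, 0 <= t -> `|jac f x t| <= M.

(* (x1, x2) is a solution of the coupled delay system, with continuous initial
   functions on [-max(T12,T21), 0] (continuity on [-max(T12,T21), +oo)). *)
Definition coupled_solution (R : realType) (m p : nat)
  (f1 f2 : 'rV[R]_m -> R -> 'rV[R]_m) (G : 'M[R]_(m, p))
  (k12 k21 T12 T21 : R) (x1 x2 : R -> 'rV[R]_m) : Prop :=
  let T := Num.max T12 T21 in
  {within [set t : R | - T <= t], continuous x1} /\
  {within [set t : R | - T <= t], continuous x2} /\
  (forall t : R, 0 < t ->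
     is_derive t 1 x1 (f1 (x1 t) t + k21^-1 *: ((x2 (t - T21) - x1 t) *m (G *m G^T)))) /\
  (forall t : R, 0 < t ->
     is_derive t 1 x2 (f2 (x2 t) t + k12^-1 *: ((x1 (t - T12) - x2 t) *m (G *m G^T)))).

(* Let e1, e2 be the differences of two solutions and W = k21 |e1|^2 + k12 |e2|^2.
   Contraction of f1, f2 gives W' <= -2 beta W plus the coupling terms
   2 <e2(t - T21) G, e1(t) G> - 2 |e1(t) G|^2 and symmetrically; by 2ab <= a^2 + b^2
   these are absorbed into the Lyapunov-Krasovskii functional
     H(t) = W(t) + int_{t-T12}^t |e1 G|^2 + int_{t-T21}^t |e2 G|^2,
   so that H' <= -2 beta W for every value of the delays.  Hence H is nonincreasing
   and W stays bounded; the bounded Jacobians then bound W' from below, so W cannot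
   stay away from 0 on long intervals without H decreasing below its infimum:
   W, and with it e1 and e2, tends to 0. *)

From HB Require Import structures.
From mathcomp Require Import all_boot all_order all_algebra.
From mathcomp Require Import all_classical all_reals all_analysis.
From mathcomp Require Import ring lra.
Import Order.TTheory GRing.Theory Num.Theory.
Import numFieldNormedType.Exports.
Local Open Scope classical_set_scope.
Local Open Scope ring_scope.

Set Implicit Arguments.
Unset Strict Implicit.
Unset Printing Implicit Defensive.

Section InnerProduct.
Variable R : realType.

Definition dot m (u v : 'rV[R]_m) : R := \sum_i u 0 i * v 0 i.
Definition sqnorm m (u : 'rV[R]_m) : R := dot u u.

Lemma dotE m (u v : 'rV[R]_m) : dot u v = (u *m v^T) 0 0.
Proof. by rewrite !mxE; apply: eq_bigr => i _; rewrite !mxE. Qed.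

Lemma dotC m (u v : 'rV[R]_m) : dot u v = dot v u.
Proof. by apply: eq_bigr => i _; rewrite mulrC. Qed.

Lemma dotDl m (u w v : 'rV[R]_m) : dot (u + w) v = dot u v + dot w v.
Proof. by rewrite /dot -big_split; apply: eq_bigr => i _; rewrite !mxE mulrDl. Qed.

Lemma dotZl m (a : R) (u v : 'rV[R]_m) : dot (a *: u) v = a * dot u v.
Proof. by rewrite /dot mulr_sumr; apply: eq_bigr => i _; rewrite !mxE mulrA. Qed.

Lemma dotBl m (u w v : 'rV[R]_m) : dot (u - w) v = dot u v - dot w v.
Proof. by rewrite -scaleN1r dotDl dotZl mulN1r. Qed.

Lemma dotDr m (u w v : 'rV[R]_m) : dot v (u + w) = dot v u + dot v w.
Proof. by rewrite dotC dotDl !(dotC v). Qed.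

Lemma dotBr m (u w v : 'rV[R]_m) : dot v (u - w) = dot v u - dot v w.
Proof. by rewrite dotC dotBl !(dotC v). Qed.

Lemma dot0r m (v : 'rV[R]_m) : dot v 0 = 0.
Proof. by rewrite /dot big1 // => i _; rewrite mxE mulr0. Qed.

Lemma dot_mulmxl m n (u : 'rV[R]_m) (v : 'rV[R]_n) (B : 'M[R]_(m, n)) :
  dot (u *m B) v = dot u (v *m B^T).
Proof. by rewrite !dotE trmx_mul trmxK mulmxA. Qed.

Lemma sqnorm_ge0 m (u : 'rV[R]_m) : 0 <= sqnorm u.
Proof. by apply: sumr_ge0 => i _; rewrite -expr2 sqr_ge0. Qed.

Lemma sqr_coord_le_sqnorm m (u : 'rV[R]_m) i : u 0 i ^+ 2 <= sqnorm u.
Proof.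
rewrite /sqnorm /dot (bigD1 i) //= -expr2 lerDl.
by apply: sumr_ge0 => j _; rewrite -expr2 sqr_ge0.
Qed.

Lemma dot2_le_sqnormD m (u v : 'rV[R]_m) : 2 * dot u v <= sqnorm u + sqnorm v.
Proof.
have := sqnorm_ge0 (u - v).
by rewrite /sqnorm dotBl !dotBr (dotC v u); lra.
Qed.

Lemma dot2_ge_sqnormD m (u v : 'rV[R]_m) : - (sqnorm u + sqnorm v) <= 2 * dot u v.
Proof.
have := sqnorm_ge0 (u + v).
by rewrite /sqnorm dotDl !dotDr (dotC v u); lra.
Qed.

(* A crude Cauchy-Schwarz inequality; only the existence of some constant matters. *)
Lemma sqr_sum_le n (z : 'I_n -> R) :
  (\sum_i z i) ^+ 2 <= 2 ^+ n * \sum_i z i ^+ 2.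
Proof.
elim: n z => [|n IHn] z; first by rewrite !big_ord0 expr0n /= mulr0.
rewrite !big_ord_recr /= [2 ^+ n.+1]exprS.
set S := \sum_(i < n) _; set S2 := \sum_(i < n) _.
have IH : S ^+ 2 <= 2 ^+ n * S2 := IHn _.
have pow_ge1 : 1 <= 2 ^+ n :> R by rewrite exprn_ege1 // ler1n.
have last_ge0 : 0 <= z ord_max ^+ 2 by rewrite sqr_ge0.
have sqrD_le : (S + z ord_max) ^+ 2 <= 2 * S ^+ 2 + 2 * z ord_max ^+ 2.
  by have := sqr_ge0 (S - z ord_max); nra.
have : z ord_max ^+ 2 <= 2 ^+ n * z ord_max ^+ 2 by rewrite ler_peMl.
rewrite mulrDr; lra.
Qed.

Lemma mx_entry_le_norm m n (B : 'M[R]_(m, n)) i j : `|B i j| <= `|B|.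
Proof. by rewrite [leRHS]/Num.Def.normr /= mx_normrE; exact: (le_bigmax _ _ (i, j)). Qed.

Lemma sqnorm_mulmx_le m n (u : 'rV[R]_m) (B : 'M[R]_(m, n)) :
  sqnorm (u *m B) <= n%:R * 2 ^+ m * `|B| ^+ 2 * sqnorm u.
Proof.
have entry_le j : (u *m B) 0 j ^+ 2 <= 2 ^+ m * `|B| ^+ 2 * sqnorm u.
  rewrite mxE; apply: le_trans (sqr_sum_le _) _.
  rewrite -mulrA ler_wpM2l ?exprn_ge0 // mulr_sumr.
  apply: ler_sum => i _; rewrite exprMn mulrC ler_wpM2r ?sqr_ge0 //.
  rewrite -real_normK ?num_real // lerXn2r ?nnegrE ?normr_ge0 //.
  exact: mx_entry_le_norm.
rewrite /sqnorm /dot.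
under eq_bigr do rewrite -expr2.
apply: le_trans (ler_sum _ (fun j _ => entry_le j)) _.
by rewrite sumr_const card_ord -[_ *+ n]mulr_natl !mulrA.
Qed.

Lemma dot_sym_part m (d : 'rV[R]_m) (J : 'M[R]_m) :
  dot (d *m sym_part J) d = dot (d *m J) d.
Proof.
rewrite /sym_part -scalemxAr dotZl mulmxDr dotDl (dot_mulmxl d d J^T) trmxK dotC.
lra.
Qed.

Lemma normr_lt_of_sqnorm_lt m (u : 'rV[R]_m) (eps : R) : 0 < eps ->
  sqnorm u < eps ^+ 2 -> `|u| < eps.
Proof.
move=> eps_gt0 u_lt; rewrite [ltLHS]/Num.Def.normr /= mx_normrE.
apply: bigmax_lt => // -[i j] _ /=; rewrite (ord1 i).
have : `|u 0 j| ^+ 2 < eps ^+ 2.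
  by rewrite real_normK ?num_real //; exact: le_lt_trans (sqr_coord_le_sqnorm u j) u_lt.
by have := normr_ge0 (u 0 j); nra.
Qed.

Lemma cvg0_of_sqnorm_le T (F : set_system T) {FF : Filter F} m (u : T -> 'rV[R]_m)
    (w : T -> R) (c : R) :
  0 < c -> (forall t, c * sqnorm (u t) <= w t) ->
  w t @[t --> F] --> 0 -> u t @[t --> F] --> (0 : 'rV[R]_m).
Proof.
move=> c_gt0 uw w0; apply/cvgr0Pnorm_lt => eps eps_gt0.
have ceps_gt0 : 0 < c * eps ^+ 2 by rewrite mulr_gt0 // exprn_gt0.
apply: filterS (cvgr_lt _ w0 _ ceps_gt0) => t wt.
apply: normr_lt_of_sqnorm_lt => //.
by rewrite -(ltr_pM2l c_gt0); exact: le_lt_trans (uw t) wt.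
Qed.

End InnerProduct.

Section RealLineCalculus.
Variable R : realType.

Lemma is_derive_mx_coord m n (F : R -> 'M[R]_(m, n)) (t : R) (F' : 'M[R]_(m, n)) i j :
  is_derive t 1 F F' -> is_derive t 1 (fun s => F s i j) (F' i j).
Proof.
move=> [dF <-]; apply: DeriveDef; first by move/derivable_mxP: dF; apply.
by rewrite derive_mx // mxE.
Qed.

Lemma is_derive_dot m (F G : R -> 'rV[R]_m) (t : R) (F' G' : 'rV[R]_m) :
  is_derive t 1 F F' -> is_derive t 1 G G' ->
  is_derive t 1 (fun s => dot (F s) (G s)) (dot F' (G t) + dot (F t) G').
Proof.
move=> dF dG.
have -> : (fun s => dot (F s) (G s)) = \sum_(i < m) (fun s => F s 0 i * G s 0 i).
  by apply/funext => s; rewrite /dot fct_sumE.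
have -> : dot F' (G t) + dot (F t) G' =
    \sum_(i < m) (F t 0 i * G' 0 i + G t 0 i * F' 0 i).
  by rewrite /dot -big_split; apply: eq_bigr => i _ /=; rewrite addrC (mulrC (G t 0 i)).
apply: is_derive_sum => i.
exact: is_deriveM (is_derive_mx_coord 0 i dF) (is_derive_mx_coord 0 i dG).
Qed.

Lemma is_derive_sqnorm m (F : R -> 'rV[R]_m) (t : R) (F' : 'rV[R]_m) :
  is_derive t 1 F F' -> is_derive t 1 (fun s => sqnorm (F s)) (2 * dot F' (F t)).
Proof.
move=> dF; apply: is_derive_eq (is_derive_dot dF dF) _.
by rewrite (dotC (F t)); ring.
Qed.

Lemma is_deriveMl (f : R -> R) (k t df : R) :
  is_derive t 1 f df -> is_derive t 1 (fun s => k * f s) (k * df).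
Proof. by move=> df_t; have := is_deriveZ k df_t. Qed.

Lemma is_derive_mulmxr m n q (F : R -> 'M[R]_(m, n)) (t : R) (F' : 'M[R]_(m, n))
    (B : 'M[R]_(n, q)) :
  is_derive t 1 F F' -> is_derive t 1 (fun s => F s *m B) (F' *m B).
Proof.
move=> dF.
have dFB i j : is_derive t 1 (fun s => (F s *m B) i j) ((F' *m B) i j).
  have -> : (fun s => (F s *m B) i j) = \sum_k (fun s => F s i k * B k j).
    by apply/funext => s; rewrite mxE fct_sumE.
  rewrite mxE; apply: is_derive_sum => k.
  apply: is_derive_eq (is_deriveM (is_derive_mx_coord i k dF) (is_derive_cst (B k j) t 1)) _.
  by rewrite scaler0 add0r /GRing.scale /= mulrC.
have dM : derivable (fun s => F s *m B) t 1.
  by apply/derivable_mxP => i j; case: (dFB i j).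
apply: DeriveDef => //; apply/matrixP => i j.
by rewrite derive_mx // mxE; case: (dFB i j).
Qed.

Lemma is_derive_comp_diff (V W : normedModType R) (F : R -> V) (g : V -> W) (t : R) (F' : V) :
  is_derive t 1 F F' -> differentiable g (F t) ->
  is_derive t 1 (g \o F) ('d g (F t) F').
Proof.
move=> [dF <-] dg.
have dF1 : differentiable F t by apply/derivable1_diffP.
have dgF : differentiable (g \o F) t by apply: differentiable_comp.
apply: DeriveDef; first by apply/derivable1_diffP.
by rewrite deriveE // diff_comp // deriveE.
Qed.

Lemma is_derive_shift_arg (f : R -> R) (c t df : R) :
  is_derive (t - c) 1 f df -> is_derive t 1 (fun s => f (s - c)) df.
Proof.
move=> [df_t <-]; have dft : differentiable f (t - c) by apply/derivable1_diffP.
have := is_derive_comp_diff (is_derive_shift t 1 (- c)) dft.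
by rewrite -deriveE.
Qed.

Lemma is_derive_segment m (y d : 'rV[R]_m) (s : R) :
  is_derive s 1 (fun s : R => y + s *: d) d.
Proof.
have dZ : differentiable (fun s : R => s *: d) s by apply: differentiableZl.
have dsd : is_derive s 1 (fun s : R => s *: d) d.
  apply: DeriveDef; first by apply/derivable1_diffP.
  by rewrite deriveE // diffZl //= diff_val scale1r.
by apply: is_derive_eq (is_deriveD (is_derive_cst y s 1) dsd) _; rewrite add0r.
Qed.

Lemma le_increment_of_derive (f df : R -> R) (u v k : R) : u <= v ->
  (forall s, u <= s <= v -> is_derive s 1 f (df s)) ->
  (forall s, u < s < v -> df s <= k) -> f v - f u <= k * (v - u).
Proof.
move=> uv hd hk.
pose g s := f s - k * s.
have dg s : u <= s <= v -> is_derive s 1 g (df s - k).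
  move=> /hd hs; apply: is_derive_eq (is_deriveB hs (is_deriveZ k (is_derive_id s 1))) _.
  by rewrite /GRing.scale /= mulr1.
have : g v <= g u.
  apply: (@ler0_derive1_le_cc R g u v) => //; last by rewrite !in_itv /= lexx uv.
  - move=> s; rewrite in_itv /= => /andP[us sv].
    by have [] : is_derive s 1 g (df s - k) by apply: dg; rewrite !ltW.
  - move=> s; rewrite in_itv /= => /andP[us sv].
    rewrite derive1E.
    have [_ ->] : is_derive s 1 g (df s - k) by apply: dg; rewrite !ltW.
    by rewrite subr_le0 hk // us.
  - apply: derivable_within_continuous => s; rewrite in_itv /= => hs.
    by have [] := dg s hs.
  - by rewrite in_itv /= lexx uv.
by rewrite /g mulrBr; lra.
Qed.

End RealLineCalculus.

Section ParameterizedIntegral.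
Variable R : realType.

Lemma is_derive_parameterized_integral (g : R -> R) (a x : R) :
  (forall s, a <= s -> {for s, continuous g}) -> a < x ->
  is_derive x 1 (fun y => parameterized_integral lebesgue_measure a y g) (g x).
Proof.
move=> cg ax.
have xu : x < x + 1 by rewrite ltrDl.
have ig : lebesgue_measure.-integrable `[a, x + 1] (EFin \o g).
  apply: continuous_compact_integrable; first exact: segment_compact.
  apply: continuous_in_subspaceT => s; rewrite inE /= in_itv /= => /andP[ha _].
  exact: cg.
have [dF F'x] := continuous_FTC1_closed xu ig ax (cg x (ltW ax)).
by apply: DeriveDef; [exact: dF | rewrite -derive1E F'x].
Qed.

Lemma parameterized_integral_le (g : R -> R) (a u v : R) :
  (forall s, a <= s -> {for s, continuous g}) -> (forall s, a <= s -> 0 <= g s) ->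
  a < u -> u <= v ->
  parameterized_integral lebesgue_measure a u g <= parameterized_integral lebesgue_measure a v g.
Proof.
move=> cg g0 au uv.
have := @le_increment_of_derive R (fun y => - parameterized_integral lebesgue_measure a y g)
  (fun y => - g y) u v 0 uv.
rewrite mul0r subr_le0 lerN2; apply.
- move=> s /andP[us _]; apply: is_deriveN; apply: is_derive_parameterized_integral => //.
  exact: lt_le_trans us.
- move=> s /andP[us _]; rewrite oppr_le0 g0 // ltW //.
  exact: lt_trans us.
Qed.

End ParameterizedIntegral.

Section MeanValue.
Variables (R : realType) (m : nat) (f : 'rV[R]_m -> R -> 'rV[R]_m).
Hypothesis f_C1 : C1 f.

Lemma C1_differentiable_slice (z : 'rV[R]_m) (t : R) : differentiable (fun y => f y t) z.
Proof.
have -> : (fun y => f y t) = (fun p : 'rV[R]_m * R => f p.1 p.2) \o (fun y => (y, t)) by [].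
by apply: differentiable_comp; [exact: differentiable_pair | exact: f_C1.1].
Qed.

Lemma dot_increment_mvt (x y : 'rV[R]_m) (t : R) :
  exists2 c, c \in `[0, 1]%R &
    dot (f x t - f y t) (x - y) = dot ((x - y) *m jac f (y + c *: (x - y)) t) (x - y).
Proof.
set d := x - y.
have dphi (s : R) : is_derive s 1 (fun s => dot (f (y + s *: d) t) d)
                            (dot (d *m jac f (y + s *: d) t) d).
  have df : is_derive s 1 (fun s => f (y + s *: d) t) (d *m jac f (y + s *: d) t).
    have := is_derive_comp_diff (is_derive_segment y d s) (C1_differentiable_slice _ t).
    by rewrite /jac -deriveEjacobian ?deriveE //; exact: C1_differentiable_slice.
  by apply: is_derive_eq (is_derive_dot df (is_derive_cst d s 1)) _; rewrite dot0r addr0.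
have [|c c01 h] := MVT_segment ler01 (fun s _ => dphi s).
  by apply: derivable_within_continuous => s _; have [] := dphi s.
exists c => //; move: h.
by rewrite scale1r scale0r addr0 subr0 mulr1 -dotBl (addrC y) subrK.
Qed.

Lemma contracting_dot_le (beta : R) (x y : 'rV[R]_m) (t : R) :
  contracting_id f beta -> 0 <= t ->
  dot (f x t - f y t) (x - y) <= - beta * sqnorm (x - y).
Proof.
move=> fc t0; have [c _ ->] := dot_increment_mvt x y t.
have := fc (y + c *: (x - y)) t t0 (x - y).
rewrite -dotE mulmxBr scalemx1 mul_mx_scalar dotBl dotZl dot_sym_part.
by rewrite /sqnorm subr_ge0; lra.
Qed.

Lemma bounded_jac_dot_ge (M : R) (x y : 'rV[R]_m) (t : R) :
  (forall z, `|jac f z t| <= M) ->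
  - ((m%:R * 2 ^+ m * M ^+ 2 + 1) / 2) * sqnorm (x - y) <= dot (f x t - f y t) (x - y).
Proof.
move=> fM; have [c _ ->] := dot_increment_mvt x y t.
set J := jac f _ t; set d := x - y.
have JM : `|J| ^+ 2 <= M ^+ 2.
  rewrite -[M ^+ 2]real_normK ?num_real // lerXn2r ?nnegrE ?normr_ge0 //.
  exact: le_trans (fM _) (ler_norm M).
have dJ_le : sqnorm (d *m J) <= m%:R * 2 ^+ m * M ^+ 2 * sqnorm d.
  apply: le_trans (sqnorm_mulmx_le d J) _.
  by rewrite ler_wpM2r ?sqnorm_ge0 // ler_wpM2l // mulr_ge0 // exprn_ge0.
have := dot2_ge_sqnormD (d *m J) d.
by rewrite mulNr mulrC mulrA; lra.
Qed.

End MeanValue.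

Section DissipationCvg.
Variables (R : realType) (W W' H H' : R -> R) (t0 c D : R).
Hypotheses (c_gt0 : 0 < c) (D_gt0 : 0 < D).
Hypotheses (dW : forall t, t0 <= t -> is_derive t 1 W (W' t))
  (W'_ge : forall t, t0 <= t -> - D <= W' t)
  (dH : forall t, t0 <= t -> is_derive t 1 H (H' t))
  (H'_le : forall t, t0 <= t -> H' t <= - c * W t)
  (W_ge0 : forall t, t0 <= t -> 0 <= W t)
  (H_ge0 : forall t, t0 <= t -> 0 <= H t).

Lemma dissipation_H_drop (t d eps : R) : t0 <= t -> 0 <= d ->
  (forall r, t <= r <= t + d -> eps <= W r) -> H (t + d) - H t <= - (c * eps) * d.
Proof.
move=> t0t d0 W_ge; have tt : t <= t + d by rewrite lerDl.
rewrite -[X in _ * X](addrK t) [d + t]addrC.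
apply: le_increment_of_derive => // [s /andP[ts _]|s /andP[ts sd]].
  exact/dH/(le_trans t0t).
apply: le_trans (H'_le (le_trans t0t (ltW ts))) _.
by rewrite !mulNr lerN2 ler_pM2l // W_ge // !ltW.
Qed.

Lemma dissipation_H_nonincr (u v : R) : t0 <= u -> u <= v -> H v <= H u.
Proof.
move=> t0u uv; have vu0 : 0 <= v - u by rewrite subr_ge0.
have := dissipation_H_drop (eps := 0) t0u vu0.
rewrite (addrC u) subrK mulr0 oppr0 mul0r subr_le0; apply=> r /andP[ur _].
exact/W_ge0/(le_trans t0u).
Qed.

Lemma dissipation_W_drift (t d : R) : t0 <= t -> 0 <= d -> W t - D * d <= W (t + d).
Proof.
move=> t0t d0; have tt : t <= t + d by rewrite lerDl.
have : - W (t + d) - - W t <= D * (t + d - t).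
  apply: (le_increment_of_derive (f := fun r => - W r) (df := fun r => - W' r)) => // s /andP[ts _].
  - exact/is_deriveN/dW/(le_trans t0t).
  - by rewrite lerNl; exact/W'_ge/(le_trans t0t (ltW ts)).
by rewrite [t + d - t]addrC addKr; lra.
Qed.

Lemma dissipation_W_small (eps : R) : 0 < eps -> exists N, forall t, N <= t -> W t < eps.
Proof.
move=> eps_gt0.
set E := H @` [set t | t0 <= t].
have E_inf : has_inf E.
  split; first by exists (H t0); exists t0 => /=.
  by exists 0 => _ [t t0t <-]; exact: H_ge0.
set d := eps / (2 * D).
have d_gt0 : 0 < d by rewrite divr_gt0 // mulr_gt0.
have Dd : D * d = eps / 2 by rewrite /d; field; exact: lt0r_neq0.
have gap_gt0 : 0 < c * (eps / 2) * d by rewrite !mulr_gt0 ?invr_gt0 ?mulr_gt0.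
have [_ [N t0N <-] HN] := inf_adherent gap_gt0 E_inf.
exists N => t Nt; rewrite ltNge; apply/negP => W_ge.
have t0t : t0 <= t := le_trans t0N Nt.
have W_half r : t <= r <= t + d -> eps / 2 <= W r.
  move=> /andP[tr rtd]; have rt0 : 0 <= r - t by rewrite subr_ge0.
  have := dissipation_W_drift t0t rt0.
  rewrite [t + (r - t)]addrC subrK; have : D * (r - t) <= D * d by rewrite ler_pM2l //; lra.
  lra.
have := dissipation_H_drop t0t (ltW d_gt0) W_half.
have := dissipation_H_nonincr t0N Nt.
have : inf E <= H (t + d).
  apply: ge_inf; first by exists 0 => _ [s t0s <-]; exact: H_ge0.
  by exists (t + d) => //; rewrite /= (le_trans t0t) // lerDl ltW.
lra.
Qed.

Lemma dissipation_cvg0 : W t @[t --> +oo] --> 0.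
Proof.
apply/cvgr0Pnorm_lt => eps eps_gt0.
have [N WN] := dissipation_W_small eps_gt0.
exists (Num.max N t0); split; first exact: num_real.
move=> t; rewrite gt_max => /andP[/ltW Nt /ltW t0t].
by rewrite ger0_norm ?W_ge0 // WN.
Qed.

End DissipationCvg.

Section CouplingTerm.
Variables (R : realType) (m p : nat) (G : 'M[R]_(m, p)).
Local Notation A := (G *m G^T).

Lemma is_derive_coupled_error (f : 'rV[R]_m -> R -> 'rV[R]_m) (k T t : R)
    (x y u v : R -> 'rV[R]_m) :
  is_derive t 1 x (f (x t) t + k^-1 *: ((u (t - T) - x t) *m A)) ->
  is_derive t 1 y (f (y t) t + k^-1 *: ((v (t - T) - y t) *m A)) ->
  is_derive t 1 (fun s => x s - y s)
    ((f (x t) t - f (y t) t) + k^-1 *: ((u (t - T) - v (t - T) - (x t - y t)) *m A)).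
Proof.
move=> dx dy; apply: is_derive_eq (is_deriveB dx dy) _.
by rewrite opprD addrACA -scalerBr -mulmxBl !opprD !opprK addrACA.
Qed.

Lemma coupling_dotE (k : R) (D u v : 'rV[R]_m) : k != 0 ->
  k * (2 * dot (D + k^-1 *: ((u - v) *m A)) v) =
  2 * (k * dot D v + dot (u *m G) (v *m G) - sqnorm (v *m G)).
Proof.
move=> k0; have dotA w : dot (w *m A) v = dot (w *m G) (v *m G).
  by rewrite mulmxA dot_mulmxl trmxK.
rewrite dotDl dotZl mulmxBl dotBl !dotA /sqnorm.
set X := dot (u *m G) _; set Y := dot (v *m G) _.
rewrite mulrDr mulrDr mulrA mulrCA (mulrA k) divff // mul1r; lra.
Qed.

Lemma coupling_dot_le (k b : R) (D u v : 'rV[R]_m) : 0 < k -> dot D v <= b ->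
  k * (2 * dot (D + k^-1 *: ((u - v) *m A)) v) <=
  2 * (k * b) + sqnorm (u *m G) - sqnorm (v *m G).
Proof.
move=> k_gt0 Db; rewrite coupling_dotE ?lt0r_neq0 //.
have : k * dot D v <= k * b by rewrite ler_pM2l.
have := dot2_le_sqnormD (u *m G) (v *m G).
lra.
Qed.

Lemma coupling_dot_ge (k b : R) (D u v : 'rV[R]_m) : 0 < k -> b <= dot D v ->
  2 * (k * b) - sqnorm (u *m G) - 3 * sqnorm (v *m G) <=
  k * (2 * dot (D + k^-1 *: ((u - v) *m A)) v).
Proof.
move=> k_gt0 bD; rewrite coupling_dotE ?lt0r_neq0 //.
have : k * b <= k * dot D v by rewrite ler_pM2l.
have := dot2_ge_sqnormD (u *m G) (v *m G).
lra.
Qed.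

End CouplingTerm.

Section DelayedCoupling.
Variables (R : realType) (m p : nat) (f1 f2 : 'rV[R]_m -> R -> 'rV[R]_m)
  (G : 'M[R]_(m, p)) (k12 k21 T12 T21 beta M1 M2 : R) (x1 x2 y1 y2 : R -> 'rV[R]_m).
Hypotheses (f1_C1 : C1 f1) (f2_C1 : C1 f2) (beta_gt0 : 0 < beta)
  (f1_contr : contracting_id f1 beta) (f2_contr : contracting_id f2 beta)
  (f1_M : forall x (t : R), 0 <= t -> `|jac f1 x t| <= M1)
  (f2_M : forall x (t : R), 0 <= t -> `|jac f2 x t| <= M2)
  (k12_gt0 : 0 < k12) (k21_gt0 : 0 < k21) (T12_ge0 : 0 <= T12) (T21_ge0 : 0 <= T21).
Local Notation A := (G *m G^T).
Hypotheses
  (dx1 : forall t : R, 0 < t ->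
     is_derive t 1 x1 (f1 (x1 t) t + k21^-1 *: ((x2 (t - T21) - x1 t) *m A)))
  (dx2 : forall t : R, 0 < t ->
     is_derive t 1 x2 (f2 (x2 t) t + k12^-1 *: ((x1 (t - T12) - x2 t) *m A)))
  (dy1 : forall t : R, 0 < t ->
     is_derive t 1 y1 (f1 (y1 t) t + k21^-1 *: ((y2 (t - T21) - y1 t) *m A)))
  (dy2 : forall t : R, 0 < t ->
     is_derive t 1 y2 (f2 (y2 t) t + k12^-1 *: ((y1 (t - T12) - y2 t) *m A))).

Let e1 (t : R) := x1 t - y1 t.
Let e2 (t : R) := x2 t - y2 t.
Let De1 (t : R) := (f1 (x1 t) t - f1 (y1 t) t) + k21^-1 *: ((e2 (t - T21) - e1 t) *m A).
Let De2 (t : R) := (f2 (x2 t) t - f2 (y2 t) t) + k12^-1 *: ((e1 (t - T12) - e2 t) *m A).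

Let W (t : R) := k21 * sqnorm (e1 t) + k12 * sqnorm (e2 t).
Let W' (t : R) := k21 * (2 * dot (De1 t) (e1 t)) + k12 * (2 * dot (De2 t) (e2 t)).

Let g1 (t : R) := sqnorm (e1 t *m G).
Let g2 (t : R) := sqnorm (e2 t *m G).
(* Based at 1 rather than 0: the errors are only known to be differentiable for t > 0. *)
Let P (g : R -> R) (t : R) := parameterized_integral lebesgue_measure 1 t g.
Let H (t : R) := W t + (P g1 t - P g1 (t - T12)) + (P g2 t - P g2 (t - T21)).
Let H' (t : R) := W' t + (g1 t - g1 (t - T12)) + (g2 t - g2 (t - T21)).

Let T := Num.max T12 T21.
Let T12_le : T12 <= T. Proof. by rewrite le_max lexx. Qed.
Let T21_le : T21 <= T. Proof. by rewrite le_max lexx orbT. Qed.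
Let T_ge0 : 0 <= T. Proof. exact: le_trans T12_ge0 T12_le. Qed.

Let is_derive_e1 (t : R) : 0 < t -> is_derive t 1 e1 (De1 t).
Proof. by move=> t_gt0; exact: is_derive_coupled_error (dx1 t_gt0) (dy1 t_gt0). Qed.

Let is_derive_e2 (t : R) : 0 < t -> is_derive t 1 e2 (De2 t).
Proof. by move=> t_gt0; exact: is_derive_coupled_error (dx2 t_gt0) (dy2 t_gt0). Qed.

Let is_derive_W (t : R) : 0 < t -> is_derive t 1 W (W' t).
Proof.
move=> t_gt0.
exact: is_deriveD (is_deriveMl k21 (is_derive_sqnorm (is_derive_e1 t_gt0)))
                  (is_deriveMl k12 (is_derive_sqnorm (is_derive_e2 t_gt0))).
Qed.

Let continuous_g1 (s : R) : 1 <= s -> {for s, continuous g1}.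
Proof.
move=> s1; have de := is_derive_mulmxr G (is_derive_e1 (lt_le_trans ltr01 s1)).
by have [/derivable1_diffP/differentiable_continuous] := is_derive_dot de de.
Qed.

Let continuous_g2 (s : R) : 1 <= s -> {for s, continuous g2}.
Proof.
move=> s1; have de := is_derive_mulmxr G (is_derive_e2 (lt_le_trans ltr01 s1)).
by have [/derivable1_diffP/differentiable_continuous] := is_derive_dot de de.
Qed.

Let is_derive_H (t : R) : T + 1 < t -> is_derive t 1 H (H' t).
Proof.
move=> Tt; have T0 := T_ge0; have t_gt0 : 0 < t by lra.
have delay1 (d : R) : d <= T -> 1 < t - d by lra.
have t1 : 1 < t by lra.
have dP (g : R -> R) : (forall s, 1 <= s -> {for s, continuous g}) -> forall d, d <= T ->
    is_derive t 1 (fun s => P g s - P g (s - d)) (g t - g (t - d)).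
  move=> cg d dT; apply: is_deriveB; first exact: is_derive_parameterized_integral cg t1.
  exact/is_derive_shift_arg/(is_derive_parameterized_integral cg (delay1 d dT)).
exact: is_deriveD (is_deriveD (is_derive_W t_gt0) (dP g1 continuous_g1 T12 T12_le))
  (dP g2 continuous_g2 T21 T21_le).
Qed.

Let H'_le (t : R) : 0 <= t -> H' t <= - (2 * beta) * W t.
Proof.
move=> t_ge0.
have half1 : k21 * (2 * dot (De1 t) (e1 t)) <=
    2 * (k21 * (- beta * sqnorm (e1 t))) + g2 (t - T21) - g1 t.
  exact: coupling_dot_le k21_gt0 (contracting_dot_le f1_C1 (x1 t) (y1 t) f1_contr t_ge0).
have half2 : k12 * (2 * dot (De2 t) (e2 t)) <=
    2 * (k12 * (- beta * sqnorm (e2 t))) + g1 (t - T12) - g2 t.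
  exact: coupling_dot_le k12_gt0 (contracting_dot_le f2_C1 (x2 t) (y2 t) f2_contr t_ge0).
rewrite /H' /W' /W; lra.
Qed.

Let W_ge0 (t : R) : 0 <= W t.
Proof. by rewrite addr_ge0 // mulr_ge0 ?sqnorm_ge0 // ltW. Qed.

Let W_le_H (t : R) : T + 1 < t -> W t <= H t.
Proof.
move=> Tt.
have P_le (g : R -> R) (d : R) : (forall s, 1 <= s -> {for s, continuous g}) ->
    (forall s, 1 <= s -> 0 <= g s) -> 0 <= d -> d <= T -> P g (t - d) <= P g t.
  move=> cg g0 d0 dT; apply: parameterized_integral_le => //; lra.
have := P_le g1 T12 continuous_g1 (fun s _ => sqnorm_ge0 _) T12_ge0 T12_le.
have := P_le g2 T21 continuous_g2 (fun s _ => sqnorm_ge0 _) T21_ge0 T21_le.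
rewrite /H; lra.
Qed.

Let H_nonincr (u v : R) : T + 2 <= u -> u <= v -> H v <= H u.
Proof.
apply: (dissipation_H_nonincr (W := W) (H' := H') (c := 2 * beta)).
- by rewrite mulr_gt0.
- by move=> t Tt; apply: is_derive_H; lra.
- by move=> t Tt; apply: H'_le; have := T_ge0; lra.
- by move=> t _; exact: W_ge0.
Qed.

Let W_le_H_start (s : R) : T + 2 <= s -> W s <= H (T + 2).
Proof.
move=> Ts; apply: le_trans (H_nonincr (lexx _) Ts).
by apply: W_le_H; lra.
Qed.

Let H_start_ge0 : 0 <= H (T + 2).
Proof. exact: le_trans (W_ge0 _) (W_le_H_start (lexx _)). Qed.

Let e1_le (s : R) : T + 2 <= s -> k21 * sqnorm (e1 s) <= H (T + 2).
Proof.
move=> Ts; apply: le_trans (W_le_H_start Ts).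
by rewrite lerDl mulr_ge0 ?sqnorm_ge0 // ltW.
Qed.

Let e2_le (s : R) : T + 2 <= s -> k12 * sqnorm (e2 s) <= H (T + 2).
Proof.
move=> Ts; apply: le_trans (W_le_H_start Ts).
by rewrite lerDr mulr_ge0 ?sqnorm_ge0 // ltW.
Qed.

Let K := p%:R * 2 ^+ m * `|G| ^+ 2 * (H (T + 2) / k21 + H (T + 2) / k12).

Let cG_ge0 : 0 <= p%:R * 2 ^+ m * `|G| ^+ 2.
Proof. by rewrite mulr_ge0 ?sqr_ge0 // mulr_ge0 ?exprn_ge0. Qed.

Let K_ge0 : 0 <= K.
Proof. by rewrite /K mulr_ge0 ?cG_ge0 // addr_ge0 // divr_ge0 ?H_start_ge0 // ltW. Qed.

Let g1_le (s : R) : T + 2 <= s -> g1 s <= K.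
Proof.
move=> Ts; apply: le_trans (sqnorm_mulmx_le _ _) _.
have cG0 := cG_ge0; rewrite /K ler_wpM2l //.
have : sqnorm (e1 s) <= H (T + 2) / k21 by rewrite ler_pdivlMr // mulrC e1_le.
have : 0 <= H (T + 2) / k12 by rewrite divr_ge0 ?H_start_ge0 // ltW.
lra.
Qed.

Let g2_le (s : R) : T + 2 <= s -> g2 s <= K.
Proof.
move=> Ts; apply: le_trans (sqnorm_mulmx_le _ _) _.
have cG0 := cG_ge0; rewrite /K ler_wpM2l //.
have : sqnorm (e2 s) <= H (T + 2) / k12 by rewrite ler_pdivlMr // mulrC e2_le.
have : 0 <= H (T + 2) / k21 by rewrite divr_ge0 ?H_start_ge0 // ltW.
lra.
Qed.

Let W'_ge : exists D, 0 < D /\ forall t, T + 2 + T <= t -> - D <= W' t.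
Proof.
set B := H (T + 2); have B_ge0 : 0 <= B := H_start_ge0.
set c1 := (m%:R * 2 ^+ m * M1 ^+ 2 + 1) / 2.
set c2 := (m%:R * 2 ^+ m * M2 ^+ 2 + 1) / 2.
have c1_ge0 : 0 <= c1 by rewrite divr_ge0 // addr_ge0 // mulr_ge0 ?sqr_ge0 // mulr_ge0 ?exprn_ge0.
have c2_ge0 : 0 <= c2 by rewrite divr_ge0 // addr_ge0 // mulr_ge0 ?sqr_ge0 // mulr_ge0 ?exprn_ge0.
exists (2 * (c1 * B) + 2 * (c2 * B) + 8 * K + 1); split.
  by have := mulr_ge0 c1_ge0 B_ge0; have := mulr_ge0 c2_ge0 B_ge0; have := K_ge0; lra.
move=> t Tt; have T0 := T_ge0; have t_ge0 : 0 <= t by lra.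
have half1 : 2 * (k21 * (- c1 * sqnorm (e1 t))) - g2 (t - T21) - 3 * g1 t <=
    k21 * (2 * dot (De1 t) (e1 t)).
  exact: coupling_dot_ge k21_gt0 (bounded_jac_dot_ge f1_C1 (x1 t) (y1 t) (fun z => f1_M z t_ge0)).
have half2 : 2 * (k12 * (- c2 * sqnorm (e2 t))) - g1 (t - T12) - 3 * g2 t <=
    k12 * (2 * dot (De2 t) (e2 t)).
  exact: coupling_dot_ge k12_gt0 (bounded_jac_dot_ge f2_C1 (x2 t) (y2 t) (fun z => f2_M z t_ge0)).
have : c1 * (k21 * sqnorm (e1 t)) <= c1 * B by rewrite ler_wpM2l // e1_le; lra.
have : c2 * (k12 * sqnorm (e2 t)) <= c2 * B by rewrite ler_wpM2l // e2_le; lra.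
have T12T := T12_le; have T21T := T21_le.
have : g1 t <= K by apply: g1_le; lra.
have : g2 t <= K by apply: g2_le; lra.
have : g1 (t - T12) <= K by apply: g1_le; lra.
have : g2 (t - T21) <= K by apply: g2_le; lra.
rewrite /W'; lra.
Qed.

Lemma coupled_error_energy_cvg0 : W t @[t --> +oo] --> 0.
Proof.
have [D [D_gt0 W'_ge_D]] := W'_ge; have T0 := T_ge0.
apply: (dissipation_cvg0 (W' := W') (H := H) (H' := H') (t0 := T + 2 + T)
  (c := 2 * beta) _ D_gt0).
- by rewrite mulr_gt0.
- by move=> t Tt; apply: is_derive_W; lra.
- exact: W'_ge_D.
- by move=> t Tt; apply: is_derive_H; lra.
- by move=> t Tt; apply: H'_le; lra.
- by move=> t _; exact: W_ge0.
- by move=> t Tt; apply: le_trans (W_ge0 t) (W_le_H _); lra.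
Qed.

End DelayedCoupling.

Theorem theorem1 (R : realType) (m p : nat) (f1 f2 : 'rV[R]_m -> R -> 'rV[R]_m)
  (G : 'M[R]_(m, p)) (k12 k21 T12 T21 : R) :
  C1 f1 -> C1 f2 ->
  (exists beta : R, 0 < beta /\ contracting_id f1 beta /\ contracting_id f2 beta) ->
  bounded_jac f1 -> bounded_jac f2 ->
  0 < k12 -> 0 < k21 -> 0 <= T12 -> 0 <= T21 ->
  forall x1 x2 y1 y2 : R -> 'rV[R]_m,
    coupled_solution f1 f2 G k12 k21 T12 T21 x1 x2 ->
    coupled_solution f1 f2 G k12 k21 T12 T21 y1 y2 ->
    (x1 t - y1 t : 'rV[R]_m) @[t --> +oo] --> (0 : 'rV[R]_m) /\ (x2 t - y2 t : 'rV[R]_m) @[t --> +oo] --> (0 : 'rV[R]_m).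
Proof.
move=> f1_C1 f2_C1 [beta [beta_gt0 [f1_contr f2_contr]]] [M1 f1_M] [M2 f2_M]
  k12_gt0 k21_gt0 T12_ge0 T21_ge0 x1 x2 y1 y2 [_ [_ [dx1 dx2]]] [_ [_ [dy1 dy2]]].
have energy_cvg0 := coupled_error_energy_cvg0 f1_C1 f2_C1 beta_gt0 f1_contr f2_contr
  f1_M f2_M k12_gt0 k21_gt0 T12_ge0 T21_ge0 dx1 dx2 dy1 dy2.
split.
- apply: (cvg0_of_sqnorm_le k21_gt0 _ energy_cvg0) => t.
  by rewrite lerDl mulr_ge0 ?sqnorm_ge0 // ltW.
- apply: (cvg0_of_sqnorm_le k12_gt0 _ energy_cvg0) => t.
  by rewrite lerDr mulr_ge0 ?sqnorm_ge0 // ltW.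
Qed.
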